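(* Let $\mathcal R_1\subset\mathcal G$ be finite and let $\mathcal R_2\subset\mathcal G$ have Property 2. Then there exists a finite set $\mathcal R_3\subset\mathcal G$ such that $\mathcal R_1\subset\mathcal R_3\mathcal R_2$ and the seminorms $p_{\mathcal R_3\mathcal R_2}$ and $q_{\mathcal R_3,\mathcal R_2}$ on $(\mathbb R^d)^{\mathcal R_3\mathcal R_2}$ are equivalent.
   Context: Euclidean group: $\mathrm E(n)$ consists of pairs $(A|b)$, $A\in\mathrm O(n)$, $b\in\mathbb R^n$, acting by $(A|b)\cdot x=Ax+b$, product $(A_1|b_1)(A_2|b_2)=(A_1A_2|b_1+A_1b_2)$; $\mathrm{rot}(A|b)=A$. Standing setting: $d=d_1+d_2$; $\mathcal S<\mathrm E(d_2)$ is a space group (discrete subgroup containing $d_2$ translations with linearly independent translation vectors); for $A\in\mathrm O(d_1)$, $(B|b)\in\mathrm E(d_2)$, $A\oplus(B|b)=(\mathrm{diag}(A,B)|(0,b))$. $\mathcal G$ is a discrete subgroup of $\mathrm E(d)$ (all orbits discrete) contained in $\{A\oplus s:A\in\mathrm O(d_1),s\in\mathcal S\}$ with $\{s: A\oplus s\in\mathcal G\}=\mathcal S$. $x_0\in\mathbb R^d$ is such that $g\mapsto g\cdot x_0$ is injective on $\mathcal G$; with $d_{\mathrm{aff}}$ the dimension of the affine hull $\mathrm{aff}(\mathcal G\cdot x_0)$, it is assumed that $\mathcal G\cdot x_0\subset\{0_{d-d_{\mathrm{aff}}}\}\times\mathbb R^{d_{\mathrm{aff}}}$ and $\mathcal G$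 acts trivially on $\mathbb R^{d-d_{\mathrm{aff}}}\times\{0_{d_{\mathrm{aff}}}\}$. For $\mathcal R\subset\mathcal G$: $U_{\mathrm{iso}}(\mathcal R)$ is the set of $u:\mathcal R\to\mathbb R^d$ for which there are $a\in\mathbb R^d$ and $S\in\mathrm{Skew}(d)$ with $\mathrm{rot}(g)u(g)=a+S(g\cdot x_0-x_0)$ for all $g\in\mathcal R$. For finite $\mathcal R$, $(\mathbb R^d)^{\mathcal R}$ has the Euclidean norm $\|v\|=(\sum_{h\in\mathcal R}|v(h)|^2)^{1/2}$ and $p_{\mathcal R}(v)=\mathrm{dist}(v,U_{\mathrm{iso}}(\mathcal R))$. For finite $\mathcal R_1,\mathcal R_2$ and $v:\mathcal R_1\mathcal R_2\to\mathbb R^d$ (where $\mathcal R_1\mathcal R_2=\{gh:g\in\mathcal R_1,h\in\mathcal R_2\}$), $q_{\mathcal R_1,\mathcal R_2}(v)=\big(\sum_{g\in\mathcal R_1}p_{\mathcal R_2}(v(g\,\cdot)|_{\mathcal R_2})^2\big)^{1/2}$. Property 1: $\mathcal R\subset\mathcal G$ is finite, $\mathrm{id}\in\mathcal R$, and $\mathrm{aff}(\mathcal R\cdot x_0)=\mathrm{aff}(\mathcal G\cdot x_0)$. Property 2: $\mathcal R$ is finite and there are $\mathcal R',\mathcal R''\subset\mathcal G$ with $\mathrm{id}\in\mathcal R'$, $\mathcal R'$ generating $\mathcal G$, $\mathcal R''$ having Property 1, and $\mathcal R'\mathcal R''\subset\mathcal R$. *)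

From HB Require Import structures.
From mathcomp Require Import all_boot all_order all_algebra.
From mathcomp Require Import finmap.
From mathcomp Require Import boolp classical_sets cardinality reals.

Set Implicit Arguments.
Unset Strict Implicit.
Unset Printing Implicit Defensive.

Import Order.TTheory GRing.Theory Num.Theory.
Local Open Scope ring_scope.
Local Open Scope classical_set_scope.

Section Euclid.
Variable R : realType.

(* elements of E(n) : pairs (A | b) ; membership in E(n) is [isE] *)
Definition Eel (n : nat) := ('M[R]_n * 'cV[R]_n)%type.

Definition orthogonal (n : nat) (A : 'M[R]_n) : Prop := A^T *m A = 1%:M.
Definition isE (n : nat) (g : Eel n) : Prop := orthogonal (fst g).

Definition eid (n : nat) : Eel n := (1%:M, 0).
Definition emul (n : nat) (g h : Eel n) : Eel n :=
  ((fst g) *m (fst h), (snd g) + (fst g) *m (snd h)).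
Definition einv (n : nat) (g : Eel n) : Eel n := ((fst g)^T, - ((fst g)^T *m (snd g))).
Definition act (n : nat) (g : Eel n) (x : 'cV[R]_n) : 'cV[R]_n := (fst g) *m x + (snd g).
Definition rot (n : nat) (g : Eel n) : 'M[R]_n := (fst g).

Definition dsum (d1 d2 : nat) (A : 'M[R]_d1) (s : Eel d2) : Eel (d1 + d2) :=
  (block_mx A 0 0 (fst s), col_mx 0 (snd s)).

Definition enorm (n : nat) (x : 'cV[R]_n) : R := Num.sqrt (\sum_i x i 0 ^+ 2).

Definition discrete_set (n : nat) (X : set 'cV[R]_n) : Prop :=
  forall x, X x -> exists2 eps : R, 0 < eps &
    forall y, X y -> enorm (y - x) < eps -> y = x.

Definition orbit (n : nat) (H : set (Eel n)) (x : 'cV[R]_n) : set 'cV[R]_n :=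
  [set act g x | g in H].

Definition is_subgroup (n : nat) (H : set (Eel n)) : Prop :=
  [/\ H `<=` @isE n, H (eid n),
      (forall g h, H g -> H h -> H (emul g h)) &
      (forall g, H g -> H (einv g))].

Definition discrete_subgroup (n : nat) (H : set (Eel n)) : Prop :=
  is_subgroup H /\ forall x, discrete_set (orbit H x).

Definition space_group (n : nat) (S : set (Eel n)) : Prop :=
  discrete_subgroup S /\
  exists t : 'I_n -> 'cV[R]_n,
    (forall i, S (1%:M, t i)) /\ row_free (\matrix_(i < n) (t i)^T).

Definition generates (n : nat) (Rg G : set (Eel n)) : Prop :=
  Rg `<=` G /\ forall H, is_subgroup H -> Rg `<=` H -> G `<=` H.

Definition aff (n : nat) (X : set 'cV[R]_n) : set 'cV[R]_n :=
  [set x | exists k (l : 'I_k -> R) (p : 'I_k -> 'cV[R]_n),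
     [/\ forall i, X (p i), \sum_i l i = 1 & x = \sum_i l i *: p i]].

Definition indep_in (n : nat) (V : set 'cV[R]_n) (k : nat) : Prop :=
  exists f : 'I_k -> 'cV[R]_n,
    (forall i, V (f i)) /\ row_free (\matrix_(i < k) (f i)^T).
Definition diffs (n : nat) (X : set 'cV[R]_n) : set 'cV[R]_n :=
  [set x - y | x in X & y in X].
Definition aff_dim (n : nat) (X : set 'cV[R]_n) (k : nat) : Prop :=
  X !=set0 /\ indep_in (diffs X) k /\ ~ indep_in (diffs X) k.+1.

Definition skew (n : nat) (S : 'M[R]_n) : Prop := S^T = - S.

Definition Uiso (n : nat) (x0 : 'cV[R]_n) (Rs : {fset Eel n})
    (u : Eel n -> 'cV[R]_n) : Prop :=
  exists (a : 'cV[R]_n) (S : 'M[R]_n), skew S /\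
    forall g, g \in Rs -> rot g *m u g = a + S *m (act g x0 - x0).

Definition fnorm (n : nat) (Rs : {fset Eel n}) (v : Eel n -> 'cV[R]_n) : R :=
  Num.sqrt (\sum_(h <- Rs) \sum_i (v h) i 0 ^+ 2).

Definition pR (n : nat) (x0 : 'cV[R]_n) (Rs : {fset Eel n})
    (v : Eel n -> 'cV[R]_n) : R :=
  inf [set fnorm Rs (v \- u) | u in Uiso x0 Rs].

Definition Rprod (n : nat) (R1 R2 : {fset Eel n}) : {fset Eel n} :=
  [fset emul g h | g in R1, h in R2]%fset.

Definition qR (n : nat) (x0 : 'cV[R]_n) (R1 R2 : {fset Eel n})
    (v : Eel n -> 'cV[R]_n) : R :=
  Num.sqrt (\sum_(g <- R1) pR x0 R2 (fun h => v (emul g h)) ^+ 2).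

Definition seminorms_equiv (n : nat) (p q : (Eel n -> 'cV[R]_n) -> R) : Prop :=
  exists c C : R, [/\ 0 < c, 0 < C &
    forall v, c * p v <= q v /\ q v <= C * p v].

Definition standing (d1 d2 : nat) (S : set (Eel d2)) (G : set (Eel (d1 + d2)))
    (x0 : 'cV[R]_(d1 + d2)) (daff : nat) : Prop :=
  [/\ space_group S /\ discrete_subgroup G,
      G `<=` [set dsum A s | A in (@orthogonal d1) & s in S],
      [set s | (exists A, G (dsum A s))] = S :> set _,
      (forall g h, G g -> G h -> act g x0 = act h x0 -> g = h) &
      [/\ aff_dim (orbit G x0) daff,
          (forall g (i : 'I_(d1 + d2)), G g -> (i < d1 + d2 - daff)%N -> act g x0 i 0 = 0) &
          (forall g (y : 'cV[R]_(d1 + d2)), G g -> (forall i : 'I_(d1 + d2), (d1 + d2 - daff <= i)%N -> y i 0 = 0) ->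
              rot g *m y = y)]].

Definition property1 (n : nat) (G : set (Eel n)) (x0 : 'cV[R]_n)
    (Rs : set (Eel n)) : Prop :=
  [/\ Rs `<=` G, finite_set Rs, Rs (eid n) &
      aff (orbit Rs x0) = aff (orbit G x0)].

Definition property2 (n : nat) (G : set (Eel n)) (x0 : 'cV[R]_n)
    (Rs : {fset Eel n}) : Prop :=
  [set` Rs] `<=` G /\
  exists R' R'' : set (Eel n),
    [/\ R' `<=` G, R' (eid n), generates R' G, property1 G x0 R'' &
        [set emul g h | g in R' & h in R''] `<=` [set` Rs]].

End Euclid.

(* Upper bound: after the isometric change of variables h |-> g h, the field
   v(g .) on R2 is a piece of v on R3 R2, so p_{R2}(v(g .)) <= p_{R3 R2}(v).
   Lower bound: for every g in R3 take a near-optimal infinitesimal isometry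
   for v(g .) on R2 and transport it by g to an affine map M_g of R^d.  For
   g' = g r with r in R', both M_g and M_g' are close to rot(k) v(k) at the
   points k x0, k in g' R''; since aff(R'' x0) = aff(G x0), affine maps close
   on g' R'' x0 are close on any finite part of the orbit.  Choosing R3 to
   contain an R'-path from the identity to every element of R1 and
   propagating along these paths, every M_g is close to M_id, and M_id
   defines one element of U_iso(R3 R2) close to v. *)

From Pilot Require Import Defs.
From HB Require Import structures.
From mathcomp Require Import all_boot all_order all_algebra.
From mathcomp Require Import finmap.
From mathcomp Require Import boolp classical_sets cardinality reals.
From mathcomp Require Import ring.
Import Order.TTheory GRing.Theory Num.Theory.
Local Open Scope ring_scope.
Local Open Scope classical_set_scope.
Set Implicit Arguments.
Unset Strict Implicit.
Unset Printing Implicit Defensive.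

Section EuclideanGroup.
Variables (R : realType) (n : nat).
Local Notation E := (Eel R n).

Lemma orthogonalC (A : 'M[R]_n) : Defs.orthogonal A -> A *m A^T = 1%:M.
Proof. exact: mulmx1C. Qed.

Lemma orthogonal_mul (A B : 'M[R]_n) :
  Defs.orthogonal A -> Defs.orthogonal B -> Defs.orthogonal (A *m B).
Proof.
by rewrite /Defs.orthogonal => hA hB; rewrite trmx_mul mulmxA -(mulmxA _ _ A) hA mulmx1.
Qed.

Lemma emulA (g h k : E) : emul (emul g h) k = emul g (emul h k).
Proof.
case: g h k => [A a] [B b] [C c]; rewrite /emul /=.
by rewrite mulmxA mulmxDr mulmxA addrA.
Qed.

Lemma emul1g (g : E) : emul (eid R n) g = g.
Proof. by case: g => A a; rewrite /emul /eid /= !mul1mx add0r. Qed.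

Lemma emulg1 (g : E) : emul g (eid R n) = g.
Proof. by case: g => A a; rewrite /emul /eid /= mulmx1 mulmx0 addr0. Qed.

Lemma emulVg (g : E) : isE g -> emul (einv g) g = eid R n.
Proof.
by case: g => A a; rewrite /isE /Defs.orthogonal /emul /einv /eid /= => ->; rewrite addNr.
Qed.

Lemma emulgV (g : E) : isE g -> emul g (einv g) = eid R n.
Proof.
case: g => A a; rewrite /isE /emul /einv /eid /= => /orthogonalC hA.
by rewrite hA mulmxN mulmxA hA mul1mx subrr.
Qed.

Lemma emulI (g : E) : isE g -> injective (emul g).
Proof.
move=> Eg h h' /(congr1 (emul (einv g))).
by rewrite -!emulA emulVg // !emul1g.
Qed.

Lemma act_emul (g h : E) x : act (emul g h) x = act g (act h x).
Proof.
case: g h => [A a] [B b]; rewrite /act /emul /=.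
by rewrite mulmxDr mulmxA addrA addrAC.
Qed.

Lemma act_eid x : act (eid R n) x = x.
Proof. by rewrite /act /eid /= mul1mx addr0. Qed.

End EuclideanGroup.

Section Sums.
Variables (R : numDomainType) (T : eqType).

Lemma sum_le_size_mul (s : seq T) (F : T -> R) (B : R) :
  (forall x, x \in s -> F x <= B) -> \sum_(x <- s) F x <= (size s)%:R * B.
Proof.
rewrite mulr_natl; elim: s => [|a s IH] H; first by rewrite big_nil mulr0n.
rewrite big_cons mulrS lerD ?H ?mem_head // IH // => x xs.
by rewrite H // in_cons xs orbT.
Qed.

Lemma ler_sum_sub_uniq (s t : seq T) (F : T -> R) :
  uniq s -> uniq t -> {subset s <= t} -> (forall x, 0 <= F x) ->
  \sum_(x <- s) F x <= \sum_(x <- t) F x.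
Proof.
move=> us ut st F0; rewrite [X in _ <= X](bigID (mem s)) /= -[X in _ <= X + _]big_filter.
rewrite [X in _ <= X + _](perm_big s) ?lerDl ?sumr_ge0 //.
apply: uniq_perm; rewrite ?filter_uniq // => x.
by rewrite mem_filter andb_idr //; apply: st.
Qed.

Lemma ler_term_sum (s : seq T) (F : T -> R) x :
  uniq s -> x \in s -> (forall y, 0 <= F y) -> F x <= \sum_(y <- s) F y.
Proof. by move=> us xs F0; rewrite (bigD1_seq x) //= lerDl sumr_ge0. Qed.

Lemma fin_uniform_bound (s : seq T) (P : T -> R -> Prop) :
  (forall y C C', C <= C' -> P y C -> P y C') ->
  (forall y, y \in s -> exists2 C, 0 <= C & P y C) ->
  exists2 C, 0 <= C & forall y, y \in s -> P y C.
Proof.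
move=> mono; elim: s => [|a s IH] H; first by exists 0.
have [Ca Ca0 PCa] := H a (mem_head _ _).
have [Cs Cs0 PCs] : exists2 C, 0 <= C & forall y, y \in s -> P y C.
  by apply: IH => y ys; apply: H; rewrite in_cons ys orbT.
exists (Ca + Cs); first exact: addr_ge0.
move=> y; rewrite in_cons => /orP [/eqP -> | ys].
  by apply: mono PCa; rewrite lerDl.
by apply: mono (PCs y ys); rewrite lerDr.
Qed.

Lemma sum_sqr_le_sqr_sum (I : Type) (r : seq I) (F : I -> R) :
  (forall i, 0 <= F i) -> \sum_(i <- r) F i ^+ 2 <= (\sum_(i <- r) F i) ^+ 2.
Proof.
move=> F0; elim: r => [|a r IH]; first by rewrite !big_nil expr0n.
rewrite !big_cons sqrrD -addrA lerD2l (le_trans IH) // lerDr.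
by rewrite mulrn_wge0 // mulr_ge0 // sumr_ge0.
Qed.

End Sums.

Lemma sqrt_sum_sqr_le_sum (R : rcfType) (I : Type) (r : seq I) (F : I -> R) :
  (forall i, 0 <= F i) -> Num.sqrt (\sum_(i <- r) F i ^+ 2) <= \sum_(i <- r) F i.
Proof.
move=> F0; rewrite (le_trans (ler_wsqrtr (sum_sqr_le_sqr_sum r F0))) //.
by rewrite sqrtr_sqr ger0_norm // sumr_ge0.
Qed.

Lemma ler_mul_addgt0 (R : numFieldType) (K x y : R) : 0 <= K ->
  (forall e, 0 < e -> x <= K * (y + e)) -> x <= K * y.
Proof.
move=> K0 H; apply/ler_addgt0Pr => e e0.
have K1 : 0 < K + 1 by rewrite ltr_wpDl.
rewrite (le_trans (H (e / (K + 1)) _)) ?divr_gt0 // mulrDr lerD2l mulrCA.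
by rewrite ger_pMr ?ler_pdivrMr ?mul1r ?lerDl.
Qed.

Section Norm1.
Variables (R : realType) (n : nat).
Implicit Types x y : 'cV[R]_n.

Definition norm1 x : R := \sum_i `|x i 0|.

Lemma norm1_ge0 x : 0 <= norm1 x.
Proof. exact: sumr_ge0. Qed.

Lemma norm10 : norm1 0 = 0.
Proof. by rewrite /norm1 big1 // => i _; rewrite mxE normr0. Qed.

Lemma norm1D x y : norm1 (x + y) <= norm1 x + norm1 y.
Proof. by rewrite /norm1 -big_split /=; apply: ler_sum => i _; rewrite mxE ler_normD. Qed.

Lemma norm1N x : norm1 (- x) = norm1 x.
Proof. by apply: eq_bigr => i _; rewrite mxE normrN. Qed.

Lemma norm1B x y : norm1 (x - y) <= norm1 x + norm1 y.
Proof. by rewrite -(norm1N y) norm1D. Qed.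

Lemma norm1_subtriangle x y z : norm1 (x - z) <= norm1 (x - y) + norm1 (y - z).
Proof. by rewrite -[x in x - z](subrK y) -addrA norm1D. Qed.

Lemma norm1Z (a : R) x : norm1 (a *: x) = `|a| * norm1 x.
Proof. by rewrite /norm1 mulr_sumr; apply: eq_bigr => i _; rewrite mxE normrM. Qed.

Lemma norm1_sum (I : Type) (r : seq I) (F : I -> 'cV[R]_n) :
  norm1 (\sum_(j <- r) F j) <= \sum_(j <- r) norm1 (F j).
Proof.
rewrite /norm1 exchange_big /=; apply: ler_sum => i _.
by rewrite summxE ler_norm_sum.
Qed.

Lemma sqr_enorm x : enorm x ^+ 2 = \sum_i x i 0 ^+ 2.
Proof. by rewrite /enorm sqr_sqrtr // sumr_ge0 // => i _; rewrite sqr_ge0. Qed.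

Lemma enorm_ge0 x : 0 <= enorm x.
Proof. exact: sqrtr_ge0. Qed.

Lemma enorm_le_norm1 x : enorm x <= norm1 x.
Proof.
rewrite /enorm -[norm1 x]ger0_norm ?norm1_ge0 // -sqrtr_sqr ler_wsqrtr //.
have -> : \sum_i x i 0 ^+ 2 = \sum_i `|x i 0| ^+ 2.
  by apply: eq_bigr => i _; rewrite real_normK ?num_real.
exact: sum_sqr_le_sqr_sum.
Qed.

Lemma coord_le_enorm x i : `|x i 0| <= enorm x.
Proof.
rewrite -(ler_pXn2r (n:=2)) // ?nnegrE ?enorm_ge0 // sqr_enorm real_normK ?num_real //.
by rewrite (bigD1 i) //= lerDl sumr_ge0 // => j _; rewrite sqr_ge0.
Qed.

Lemma norm1_le_enorm x : norm1 x <= n%:R * enorm x.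
Proof.
rewrite /norm1 (le_trans (ler_sum _ (fun i _ => coord_le_enorm x i))) //.
by rewrite sumr_const card_ord mulr_natl.
Qed.

Lemma enorm_orthogonal (A : 'M[R]_n) x : Defs.orthogonal A -> enorm (A *m x) = enorm x.
Proof.
have sqE y : \sum_i y i 0 ^+ 2 = (y^T *m y) 0 0 :> R.
  by rewrite mxE; apply: eq_bigr => i _; rewrite !mxE expr2.
by move=> hA; rewrite /enorm !sqE trmx_mul mulmxA -(mulmxA _ _ A) hA mulmx1.
Qed.

End Norm1.


Section Seminorm.
Variables (R : realType) (n : nat) (x0 : 'cV[R]_n).
Local Notation E := (Eel R n).
Implicit Types (Rs : {fset E}) (v w : E -> 'cV[R]_n).

Lemma fnorm_ge0 Rs w : 0 <= fnorm Rs w.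
Proof. exact: sqrtr_ge0. Qed.

Lemma enorm_le_fnorm Rs w h : h \in Rs -> enorm (w h) <= fnorm Rs w.
Proof.
move=> hR; rewrite /fnorm /enorm ler_wsqrtr //.
apply: (ler_term_sum (F := fun k => \sum_i w k i 0 ^+ 2)) => // [|k].
  exact: fset_uniq.
by rewrite sumr_ge0 // => i _; rewrite sqr_ge0.
Qed.

Lemma fnorm_le_sum Rs w : fnorm Rs w <= \sum_(h <- Rs) enorm (w h).
Proof.
rewrite /fnorm; under eq_bigr do rewrite -sqr_enorm.
by apply: sqrt_sum_sqr_le_sum => h; apply: enorm_ge0.
Qed.

Lemma Uiso0 Rs : Uiso x0 Rs (fun=> 0).
Proof.
exists 0, 0; split; first by rewrite /Defs.skew trmx0 oppr0.
by move=> g _; rewrite mulmx0 mul0mx addr0.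
Qed.

Let has_inf_pR Rs v : has_inf [set fnorm Rs (v \- u) | u in Uiso x0 Rs].
Proof.
split; first by exists (fnorm Rs (v \- fun=> 0)), (fun=> 0) => //; apply: Uiso0.
by exists 0 => _ [u _ <-]; apply: fnorm_ge0.
Qed.

Lemma pR_le_fnorm Rs v u : Uiso x0 Rs u -> pR x0 Rs v <= fnorm Rs (v \- u).
Proof. by move=> Uu; apply: (ge_inf (has_inf_pR Rs v).2); exists u. Qed.

Lemma le_pR Rs v a :
  (forall u, Uiso x0 Rs u -> a <= fnorm Rs (v \- u)) -> a <= pR x0 Rs v.
Proof. by move=> H; apply: lb_le_inf (has_inf_pR Rs v).1 _ => _ [u Uu <-]; apply: H. Qed.

Lemma pR_ge0 Rs v : 0 <= pR x0 Rs v.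
Proof. by apply: le_pR => u _; apply: fnorm_ge0. Qed.

Lemma pR_approx Rs v eps : 0 < eps ->
  exists2 u, Uiso x0 Rs u & fnorm Rs (v \- u) <= pR x0 Rs v + eps.
Proof.
move=> eps0; have [_ [u Uu <-] lt] := inf_adherent eps0 (has_inf_pR Rs v).
by exists u => //; apply: ltW.
Qed.

End Seminorm.

Section Generation.
Variables (R : realType) (n : nat).
Local Notation E := (Eel R n).
Variables (G R' : set E).
Hypothesis HG : is_subgroup G.

Definition adjacent (x y : E) := exists2 r, R' r & (y = emul x r \/ x = emul y r).

Fixpoint adjacent_path (x : E) (s : seq E) : Prop :=
  if s is y :: s' then adjacent x y /\ adjacent_path y s' else True.

Definition connected (x y : E) := exists2 s, adjacent_path x s & last x s = y.

Definition connected_within (R3 : {fset E}) :=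
  forall g, g \in R3 -> exists2 s, adjacent_path (eid R n) s &
    g \in eid R n :: s /\ {subset s <= R3}.

Lemma adjacent_sym x y : adjacent x y -> adjacent y x.
Proof. by case=> r R'r [] e; exists r => //; [right|left]. Qed.

Lemma adjacent_mull g x y : adjacent x y -> adjacent (emul g x) (emul g y).
Proof. by case=> r R'r [] ->; exists r => //; [left|right]; rewrite emulA. Qed.

Lemma adjacent_path_cat x s t :
  adjacent_path x s -> adjacent_path (last x s) t -> adjacent_path x (s ++ t).
Proof. by elim: s x => [|y s IH] x //= [xy ys] st; split => //; apply: IH. Qed.

Lemma connected_trans x y z : connected x y -> connected y z -> connected x z.
Proof.
move=> [s ps <-] [t pt <-]; exists (s ++ t); last by rewrite last_cat.
exact: adjacent_path_cat.
Qed.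

Lemma connected_sym x y : connected x y -> connected y x.
Proof.
case=> s + <-; elim: s x => [|z s IH] x /=; first by exists [::].
case=> xz zs; apply: connected_trans (IH _ zs) _.
by exists [:: x] => //=; split => //; apply: adjacent_sym.
Qed.

Lemma connected_mull g x y : connected x y -> connected (emul g x) (emul g y).
Proof.
case=> s ps <-; exists (map (emul g) s); last by rewrite last_map.
by elim: s x ps => [|z s IH] x //= [xz zs]; split; [apply: adjacent_mull | apply: IH].
Qed.

Hypothesis HR'G : R' `<=` G.

Lemma adjacent_subgroup x y : G x -> adjacent x y -> G y.
Proof.
case: HG => GE _ GM GV Gx [r R'r [->|xE]]; first exact: GM (HR'G R'r).
have Er : isE r := GE _ (HR'G R'r).
by rewrite -(emulg1 y) -(emulgV Er) -emulA -xE; apply: GM => //; apply/GV/HR'G.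
Qed.

Lemma adjacent_path_subgroup x s y : G x -> adjacent_path x s -> y \in s -> G y.
Proof.
elim: s x => [|z s IH] x //= Gx [xz zs]; have Gz := adjacent_subgroup Gx xz.
by rewrite in_cons => /orP [/eqP -> //|]; apply: IH Gz zs.
Qed.

Hypothesis HR'gen : generates R' G.

Lemma generates_connected g : G g -> connected (eid R n) g.
Proof.
have [GE G1 GM GV] := HG.
suff /(HR'gen.2 _) sub : is_subgroup (G `&` connected (eid R n)).
  move=> Gg; apply: (sub _ _ Gg).2 => r R'r; split; first exact: HR'G.
  by exists [:: r] => //=; split => //; exists r => //; left; rewrite emul1g.
split=> [x [Gx _]|||x [Gx cx]]; first exact: GE.
- by split=> //; exists [::].
- move=> x y [Gx cx] [Gy cy]; split; first exact: GM.
  by apply: connected_trans cx _; rewrite -{1}(emulg1 x); apply: connected_mull.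
- split; first exact: GV.
  have := connected_mull (einv x) cx; rewrite emulg1 emulVg; last exact: GE.
  exact: connected_sym.
Qed.

End Generation.

Section AffineRigidity.
Variables (R : realType) (n : nat).
Local Notation E := (Eel R n).

(* An affine map y |-> L y + c of R^n is stored as the pair (L, c), the same
   encoding as elements of E(n), so that [act g] is [amap_ev g]. *)
Definition amap := ('M[R]_n * 'cV[R]_n)%type.

Definition amap_ev (m : amap) (y : 'cV[R]_n) := m.1 *m y + m.2.

Lemma amap_evD (a b : amap) y : amap_ev (a + b) y = amap_ev a y + amap_ev b y.
Proof. by rewrite /amap_ev mulmxDl addrACA. Qed.

Lemma amap_evB (a b : amap) y : amap_ev (a - b) y = amap_ev a y - amap_ev b y.
Proof. by rewrite /amap_ev mulmxBl opprD addrACA. Qed.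

Lemma amap_ev_affine_comb (m : amap) k (l : 'I_k -> R) (p : 'I_k -> 'cV[R]_n) :
  \sum_i l i = 1 -> amap_ev m (\sum_i l i *: p i) = \sum_i l i *: amap_ev m (p i).
Proof.
move=> l1; rewrite /amap_ev mulmx_sumr; under [RHS]eq_bigr do rewrite scalerDr.
rewrite big_split /= -scaler_suml l1 scale1r; congr (_ + _).
by apply: eq_bigr => i _; rewrite scalemxAr.
Qed.

Variables (G R'' : set E) (x0 : 'cV[R]_n).
Hypothesis HG : is_subgroup G.
Hypothesis Haff : aff (Defs.orbit R'' x0) = aff (Defs.orbit G x0).

(* Every point of the orbit is an affine combination of points of g R'' x0. *)
Lemma amap_bound_orbit g y : G g -> Defs.orbit G x0 y ->
  exists2 K, 0 <= K & forall m Et, 0 <= Et ->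
    (forall h, R'' h -> norm1 (amap_ev m (act g (act h x0))) <= Et) ->
    norm1 (amap_ev m y) <= K * Et.
Proof.
have [GE _ GM GV] := HG; move=> Gg [k Gk <-].
set z := act (einv g) (act k x0).
have : aff (Defs.orbit G x0) z.
  exists 1%N, (fun=> 1), (fun=> z); split; rewrite ?big_ord1 ?scale1r //.
  by move=> _; exists (emul (einv g) k); [apply: GM => //; apply: GV | rewrite act_emul].
rewrite -Haff => -[m [l [p [pR'' l1 zE]]]].
exists (\sum_i `|l i|) => [|M Et Et0 MR'']; first exact: sumr_ge0.
have -> : act k x0 = amap_ev g (\sum_i l i *: p i).
  by rewrite -zE -[amap_ev g _]/(act g _) -act_emul emulgV ?act_eid //; apply: GE.
rewrite !amap_ev_affine_comb // (le_trans (norm1_sum _ _)) // mulr_suml.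
apply: ler_sum => i _; rewrite norm1Z ler_wpM2l //.
by have [h R''h <-] := pR'' i; apply: MR''.
Qed.

Lemma amap_bound_orbit_fin g (Y : seq 'cV[R]_n) : G g ->
  (forall y, y \in Y -> Defs.orbit G x0 y) ->
  exists2 K, 0 <= K & forall y, y \in Y -> forall m Et, 0 <= Et ->
    (forall h, R'' h -> norm1 (amap_ev m (act g (act h x0))) <= Et) ->
    norm1 (amap_ev m y) <= K * Et.
Proof.
move=> Gg YG; apply: fin_uniform_bound => [y C C' CC' P m Et Et0 mR''|y yY].
  by rewrite (le_trans (P m Et Et0 mR'')) // ler_wpM2r.
exact: amap_bound_orbit (YG y yY).
Qed.

End AffineRigidity.

Section Propagation.
Variables (R : realType) (n : nat).
Local Notation E := (Eel R n).
Variables (G R' R'' : set E) (x0 : 'cV[R]_n) (R3 : {fset E}) (Y : seq 'cV[R]_n).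
Hypothesis HG : is_subgroup G.
Hypothesis Haff : aff (Defs.orbit R'' x0) = aff (Defs.orbit G x0).
Hypothesis HR3G : forall g, g \in R3 -> G g.
Hypothesis HYG : forall y, y \in Y -> Defs.orbit G x0 y.

Definition neighbours_close (M : E -> amap R n) (Et : R) :=
  forall g r h, g \in R3 -> emul g r \in R3 -> R' r -> R'' h ->
    norm1 (amap_ev (M (emul g r) - M g) (act (emul g r) (act h x0))) <= Et.

(* C must work for every family M, so that it depends on the geometry only and
   not on the field v being estimated. *)
Definition close_to_id (C : R) (g : E) :=
  forall M Et, 0 <= Et -> neighbours_close M Et ->
    forall y, y \in Y -> norm1 (amap_ev (M g - M (eid R n)) y) <= C * Et.

Lemma neighbours_close_adjacent x x' : x \in R3 -> x' \in R3 -> adjacent R' x x' ->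
  exists2 g0, G g0 & forall M Et h, neighbours_close M Et -> R'' h ->
    norm1 (amap_ev (M x' - M x) (act g0 (act h x0))) <= Et.
Proof.
move=> xR3 x'R3 [r R'r [x'E|xE]]; subst.
  by exists (emul x r) => [|M Et h HM R''h]; [apply: HR3G | apply: HM].
exists (emul x' r) => [|M Et h HM R''h]; first exact: HR3G.
by rewrite amap_evB -opprB norm1N -amap_evB; apply: HM.
Qed.

Lemma close_to_id_adjacent x x' C : x \in R3 -> x' \in R3 -> adjacent R' x x' ->
  0 <= C -> close_to_id C x -> exists2 C', 0 <= C' & close_to_id C' x'.
Proof.
move=> xR3 x'R3 xx' C0 Cx; have [g0 Gg0 Hx] := neighbours_close_adjacent xR3 x'R3 xx'.
have [K K0 HK] := amap_bound_orbit_fin HG Haff Gg0 HYG.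
exists (K + C) => [|M Et Et0 HM y yY]; first by rewrite addr_ge0.
have -> : M x' - M (eid R n) = (M x' - M x) + (M x - M (eid R n)) by rewrite addrA subrK.
rewrite amap_evD (le_trans (norm1D _ _)) // mulrDl lerD //.
  by apply: HK => // h R''h; apply: Hx.
by rewrite (le_trans (Cx M Et Et0 HM y yY)) // ler_wpM2r // lerDr.
Qed.

Lemma close_to_id_path x s : x \in R3 -> {subset s <= R3} -> adjacent_path R' x s ->
  (exists2 C, 0 <= C & close_to_id C x) ->
  forall y, y \in s -> exists2 C, 0 <= C & close_to_id C y.
Proof.
elim: s x => [|z s IH] x //= xR3 sR3 [xz zs] [C C0 Cx].
have zR3 : z \in R3 by apply: sR3; rewrite mem_head.
have sR3' : {subset s <= R3} by move=> w ws; apply: sR3; rewrite in_cons ws orbT.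
have Cz := close_to_id_adjacent xR3 zR3 xz C0 Cx.
by move=> y; rewrite in_cons => /orP [/eqP -> //|]; apply: IH zR3 sR3' zs Cz y.
Qed.

Lemma close_to_id_uniform : connected_within R' R3 -> eid R n \in R3 ->
  exists2 C, 0 <= C & forall g, g \in R3 -> close_to_id C g.
Proof.
move=> R3path eR3; apply: fin_uniform_bound => [g C C' CC' Cg M Et Et0 HM y yY|g gR3].
  by rewrite (le_trans (Cg M Et Et0 HM y yY)) // ler_wpM2r.
have close_id : exists2 C, 0 <= C & close_to_id C (eid R n).
  by exists 0 => // M Et _ _ y _; rewrite subrr /amap_ev /= mul0mx addr0 norm10 mul0r.
have [s ps [+ sR3]] := R3path g gR3; rewrite in_cons => /orP [/eqP -> //|gs].
exact: close_to_id_path eR3 sR3 ps close_id g gs.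
Qed.

End Propagation.

Section Transport.
Variables (R : realType) (n : nat) (x0 : 'cV[R]_n).
Local Notation E := (Eel R n).

Lemma RprodP (R1 R2 : {fset E}) k :
  reflect (exists g h, [/\ g \in R1, h \in R2 & k = emul g h]) (k \in Rprod R1 R2).
Proof.
apply: (iffP (imfset2P _ _ _ _ _)) => [[g gR1 [h hR2 ->]]|[g [h [gR1 hR2 ->]]]].
  by exists g, h.
by exists g => //; exists h.
Qed.

Lemma mem_Rprod (R1 R2 : {fset E}) g h : g \in R1 -> h \in R2 -> emul g h \in Rprod R1 R2.
Proof. by move=> gR1 hR2; apply/RprodP; exists g, h. Qed.

Lemma Uiso_mull (g : E) (T Rs : {fset E}) u : isE g -> Uiso x0 T u ->
  (forall h, h \in Rs -> emul g h \in T) -> Uiso x0 Rs (fun h => u (emul g h)).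
Proof.
case: g => A b; rewrite /isE /Defs.orthogonal /= => hA [a [S [skS uT]]] RsT.
exists (A^T *m a + A^T *m S *m (act (A, b) x0 - x0)), (A^T *m S *m A); split.
  by rewrite /Defs.skew !trmx_mul trmxK skS mulNmx mulmxN mulmxA.
move=> h hRs; have := uT _ (RsT h hRs); rewrite act_emul /Defs.rot /emul /= => e.
have -> : h.1 *m u (A *m h.1, b + A *m h.2) =
          A^T *m ((A *m h.1) *m u (A *m h.1, b + A *m h.2)) by rewrite !mulmxA hA mul1mx.
rewrite e; set w := act h x0.
have -> : act (A, b) w - x0 = (act (A, b) x0 - x0) + A *m (w - x0).
  by rewrite /act /= mulmxBr [RHS]addrC !addrA subrK.
by rewrite !mulmxDr addrA !mulmxA.
Qed.

Lemma pR_mull (g : E) (T Rs : {fset E}) v : isE g ->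
  (forall h, h \in Rs -> emul g h \in T) ->
  pR x0 Rs (fun h => v (emul g h)) <= pR x0 T v.
Proof.
move=> Eg RsT; apply: le_pR => u Uu.
rewrite (le_trans (pR_le_fnorm _ (Uiso_mull Eg Uu RsT))) // /fnorm ler_wsqrtr //.
rewrite -(big_map (emul g) predT (fun k => \sum_i (v \- u) k i 0 ^+ 2)).
apply: ler_sum_sub_uniq; rewrite ?fset_uniq //.
- by rewrite map_inj_uniq ?fset_uniq //; apply: emulI.
- by move=> k /mapP [h hRs ->]; apply: RsT.
- by move=> k; apply: sumr_ge0 => i _; apply: sqr_ge0.
Qed.

(* For g = (A|b) this is y |-> A (a + S (A^T (y - b) - x0)), the transport by g
   of the infinitesimal isometry (a, S). *)
Definition fit_amap (g : E) (a : 'cV[R]_n) (S : 'M[R]_n) : amap R n :=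
  (g.1 *m S *m g.1^T, g.1 *m a - g.1 *m S *m g.1^T *m g.2 - g.1 *m S *m x0).

Lemma fit_amap_ev (g h : E) a S : isE g ->
  amap_ev (fit_amap g a S) (act (emul g h) x0) = g.1 *m (a + S *m (act h x0 - x0)).
Proof.
case: g => A b; rewrite /isE /Defs.orthogonal /= => hA.
rewrite act_emul; set w := act h x0; rewrite /amap_ev /fit_amap /act /= mulmxDr.
have -> : A *m S *m A^T *m (A *m w) = A *m S *m w.
  by rewrite mulmxA -(mulmxA _ A^T) hA mulmx1.
rewrite [RHS]mulmxDr !mulmxBr !mulmxA.
move: (A *m S *m w) (A *m S *m A^T *m b) (A *m a) (A *m S *m x0) => X Y Z W.
by rewrite addrA [X + Y + _]addrACA subrr addr0 (addrC X) addrA.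
Qed.

End Transport.

Lemma seminorms_equiv_of_le (R : realType) n (p q : (Eel R n -> 'cV[R]_n) -> R) :
  (forall v, 0 <= p v) -> (forall v, 0 <= q v) ->
  (exists2 K, 0 <= K & forall v, p v <= K * q v) ->
  (exists2 K, 0 <= K & forall v, q v <= K * p v) -> seminorms_equiv p q.
Proof.
move=> p0 q0 [K K0 pq] [K' K'0 qp].
have K1 : 0 < K + 1 by rewrite ltr_wpDl.
exists (K + 1)^-1, (K' + 1); split; rewrite ?invr_gt0 ?ltr_wpDl // => v; split.
  by rewrite mulrC ler_pdivrMr // (le_trans (pq v)) // mulrC ler_wpM2l // lerDl.
by rewrite (le_trans (qp v)) // ler_wpM2r // lerDl.
Qed.

Section SeminormEquivalence.
Variables (R : realType) (n : nat).
Local Notation E := (Eel R n).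
Variables (G R' R'' : set E) (x0 : 'cV[R]_n) (R2 R3 : {fset E}).
Hypothesis HG : is_subgroup G.
Hypothesis HR2G : forall h, h \in R2 -> G h.
Hypothesis HR3G : forall g, g \in R3 -> G g.

Local Notation T := (Rprod R3 R2).

Lemma Rprod_subgroup k : k \in T -> G k.
Proof. by case: HG => _ _ GM _ /RprodP [g [h [gR3 hR2 ->]]]; apply: GM; auto. Qed.

Lemma pR_le_qR_term v g : g \in R3 -> pR x0 R2 (fun h => v (emul g h)) <= qR x0 R3 R2 v.
Proof.
move=> gR3; rewrite /qR -[X in X <= _]ger0_norm ?pR_ge0 // -sqrtr_sqr ler_wsqrtr //.
apply: (ler_term_sum (F := fun g => pR x0 R2 (fun h => v (emul g h)) ^+ 2)) => //.
  exact: fset_uniq.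
by move=> k; apply: sqr_ge0.
Qed.

Lemma qR_le_pR v : qR x0 R3 R2 v <= (size R3)%:R * pR x0 T v.
Proof.
apply: (le_trans (sqrt_sum_sqr_le_sum _ _)) => [g|]; first exact: pR_ge0.
apply: sum_le_size_mul => g gR3; apply: pR_mull => [|h hR2]; last exact: mem_Rprod.
by case: HG => GE _ _ _; apply/GE/HR3G.
Qed.

Hypothesis HR''2 : forall h, R'' h -> h \in R2.
Hypothesis HR'R'' : forall r h, R' r -> R'' h -> emul r h \in R2.
Hypothesis Haff : aff (Defs.orbit R'' x0) = aff (Defs.orbit G x0).

Let Y := [seq act k x0 | k <- T].

Let YG y : y \in Y -> Defs.orbit G x0 y.
Proof. by move=> /mapP [k kT ->]; exists k => //; apply: Rprod_subgroup. Qed.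

Section Fits.
Variables (C : R) (v : E -> 'cV[R]_n).
Hypothesis HC : forall g, g \in R3 -> close_to_id R' R'' x0 R3 Y C g.
Variables (a : E -> 'cV[R]_n) (S : E -> 'M[R]_n) (u : E -> E -> 'cV[R]_n).
Hypothesis Sskew : forall g, Defs.skew (S g).
Hypothesis ufit : forall g h, h \in R2 -> Defs.rot h *m u g h = a g + S g *m (act h x0 - x0).

Let M g := fit_amap x0 g (a g) (S g).
Let err g := fnorm R2 ((fun h => v (emul g h)) \- u g).
Let Etot := \sum_(g <- R3) err g.
Let N : R := n%:R.

Let Etot_ge0 : 0 <= Etot.
Proof. by apply: sumr_ge0 => g _; apply: fnorm_ge0. Qed.

Let err_le_Etot g : g \in R3 -> err g <= Etot.
Proof. by move=> gR3; apply: ler_term_sum; rewrite ?fset_uniq // => k; apply: fnorm_ge0. Qed.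

Lemma fit_error g h : g \in R3 -> h \in R2 ->
  norm1 (Defs.rot (emul g h) *m v (emul g h) - amap_ev (M g) (act (emul g h) x0)) <= N * Etot.
Proof.
move=> gR3 hR2; have [GE _ _ _] := HG.
rewrite (le_trans (norm1_le_enorm _)) // ler_wpM2l ?ler0n // (le_trans _ (err_le_Etot gR3)) //.
rewrite /M fit_amap_ev; last exact/GE/HR3G.
rewrite -[a g + _]ufit // /Defs.rot /emul /=.
rewrite -mulmxA -mulmxBr -mulmxBr mulmxA enorm_orthogonal.
  exact: (enorm_le_fnorm ((fun h => v (emul g h)) \- u g)).
by apply: orthogonal_mul; apply: GE; [apply: HR3G | apply: HR2G].
Qed.

Lemma fits_neighbours_close : neighbours_close R' R'' x0 R3 M (N * Etot + N * Etot).
Proof.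
move=> g r h gR3 grR3 R'r R''h; set k := emul (emul g r) h.
set P := Defs.rot k *m v k.
have -> : amap_ev (M (emul g r) - M g) (act (emul g r) (act h x0)) =
    (P - amap_ev (M g) (act k x0)) - (P - amap_ev (M (emul g r)) (act k x0)).
  by rewrite amap_evB -act_emul [in RHS]opprB [RHS]addrC [in RHS]addrA subrK.
rewrite (le_trans (norm1B _ _)) // lerD ?fit_error ?HR''2 //.
by rewrite /P /k emulA; apply: fit_error => //; apply: HR'R''.
Qed.

Let U k := (Defs.rot k)^T *m amap_ev (M (eid R n)) (act k x0).

Lemma Uiso_fit_id : Uiso x0 T U.
Proof.
have [GE _ _ _] := HG.
exists (a (eid R n)), (S (eid R n)); split => // k kT.
rewrite /U mulmxA orthogonalC ?mul1mx; last exact/GE/Rprod_subgroup.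
rewrite /M -{1}(emul1g k) fit_amap_ev ?mul1mx //.
by rewrite /isE /Defs.orthogonal /eid /= trmx1 mul1mx.
Qed.

Lemma fit_id_error k : k \in T -> enorm (v k - U k) <= N * (1 + 2 * C) * Etot.
Proof.
move=> kT; have [GE _ _ _] := HG; have Ek : isE k by apply/GE/Rprod_subgroup.
have [g [h [gR3 hR2 kE]]] := RprodP _ _ _ kT.
rewrite -(enorm_orthogonal _ Ek) mulmxBr /U mulmxA orthogonalC // mul1mx.
rewrite (le_trans (enorm_le_norm1 _)) //.
rewrite (le_trans (norm1_subtriangle _ (amap_ev (M g) (act k x0)) _)) //.
have -> : N * (1 + 2 * C) * Etot = N * Etot + C * (N * Etot + N * Etot) by ring.
apply: lerD; first by rewrite kE; apply: fit_error.
rewrite -amap_evB; apply: (HC gR3); last by apply/mapP; exists k.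
  by rewrite addr_ge0 // mulr_ge0 ?ler0n ?Etot_ge0.
exact: fits_neighbours_close.
Qed.

Lemma pR_le_fits : pR x0 T v <= (size T)%:R * (N * (1 + 2 * C)) * Etot.
Proof.
rewrite (le_trans (pR_le_fnorm _ Uiso_fit_id)) // (le_trans (fnorm_le_sum _ _)) //.
by rewrite -mulrA; apply: sum_le_size_mul => k kT; apply: fit_id_error.
Qed.

End Fits.

Lemma pR_le_qR C : 0 <= C -> (forall g, g \in R3 -> close_to_id R' R'' x0 R3 Y C g) ->
  exists2 K, 0 <= K & forall v, pR x0 T v <= K * qR x0 R3 R2 v.
Proof.
move=> C0 HC; set K0 := (size T)%:R * (n%:R * (1 + 2 * C)).
have K00 : 0 <= K0 by rewrite !mulr_ge0 ?ler0n ?addr_ge0 ?mulr_ge0.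
exists (K0 * (size R3)%:R) => [|v]; first by rewrite mulr_ge0.
apply: ler_mul_addgt0 => [|eps eps0]; first by rewrite mulr_ge0.
have fitP g : exists t : (E -> 'cV[R]_n) * 'cV[R]_n * 'M[R]_n,
    [/\ Defs.skew t.2,
      forall h, h \in R2 -> Defs.rot h *m t.1.1 h = t.1.2 + t.2 *m (act h x0 - x0)
    & fnorm R2 ((fun h => v (emul g h)) \- t.1.1) <= pR x0 R2 (fun h => v (emul g h)) + eps].
  have [u [a' [S' [skS' uR2]]] uE] := pR_approx x0 R2 (fun h => v (emul g h)) eps0.
  by exists (u, a', S').
have [fit Hfit] := choice fitP.
have Sskew g : Defs.skew (fit g).2 by case: (Hfit g).
have ufit g h : h \in R2 ->
    Defs.rot h *m (fit g).1.1 h = (fit g).1.2 + (fit g).2 *m (act h x0 - x0).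
  by case: (Hfit g) => _ + _; apply.
apply: (le_trans (pR_le_fits v HC Sskew ufit)); rewrite -[X in _ <= X]mulrA.
apply: ler_wpM2l => //.
apply: sum_le_size_mul => g gR3.
by case: (Hfit g) => _ _ /le_trans; apply; rewrite lerD2r pR_le_qR_term.
Qed.

Hypothesis He3 : eid R n \in R3.
Hypothesis HR3path : connected_within R' R3.

Lemma pR_qR_equiv : seminorms_equiv (pR x0 T) (qR x0 R3 R2).
Proof.
apply: seminorms_equiv_of_le => [v|v||]; [exact: pR_ge0 | exact: sqrtr_ge0 | |].
  by have [C C0 HC] := close_to_id_uniform HG Haff HR3G YG HR3path He3; apply: pR_le_qR HC.
by exists (size R3)%:R => //; apply: qR_le_pR.
Qed.

End SeminormEquivalence.

Lemma connected_cover (R : realType) (n : nat) (G R' : set (Eel R n)) (R1 : {fset Eel R n}) :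
  is_subgroup G -> R' `<=` G -> generates R' G -> [set` R1] `<=` G ->
  exists R3 : {fset Eel R n},
    [/\ [set` R3] `<=` G, eid R n \in R3, fsubset R1 R3 & connected_within R' R3].
Proof.
move=> HG R'G R'gen R1G; have [_ G1 _ _] := HG.
have chainP g : exists s, G g -> adjacent_path R' (eid R n) s /\ last (eid R n) s = g.
  have [Gg|] := pselect (G g); last by exists [::].
  by have [s ps ls] := generates_connected HG R'G R'gen Gg; exists s.
have [chain Hchain] := choice chainP.
pose s3 := eid R n :: flatten [seq chain g | g <- R1].
have R3E x : (x \in [fset y | y in s3]%fset) = (x \in s3) by rewrite in_fset.
have chain_sub g : g \in R1 -> {subset chain g <= s3}.
  by move=> gR1 x xg; rewrite in_cons; apply/orP; right; apply/flatten_mapP; exists g.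
exists [fset y | y in s3]%fset; split.
- move=> x /= /[!R3E] /[!in_cons] /orP [/eqP -> //|/flatten_mapP [g gR1 xg]].
  have [pg _] := Hchain g (R1G _ gR1); exact: (adjacent_path_subgroup HG R'G G1 pg xg).
- by rewrite R3E mem_head.
- apply/fsubsetP => g gR1; have [_ lg] := Hchain g (R1G _ gR1).
  rewrite R3E; have := mem_last (eid R n) (chain g); rewrite lg in_cons.
  by case/orP => [/eqP ->|/(chain_sub g gR1) //]; rewrite mem_head.
- move=> x /[!R3E] /[!in_cons] /orP [/eqP ->|/flatten_mapP [g gR1 xg]].
    by exists [::] => //; rewrite mem_head.
  have [pg _] := Hchain g (R1G _ gR1); exists (chain g) => //.
  by rewrite in_cons xg orbT; split => // y /(chain_sub g gR1); rewrite R3E.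
Qed.

Theorem lemma3p11 (R : realType) (d1 d2 : nat) (S : set (Eel R d2))
    (G : set (Eel R (d1 + d2))) (x0 : 'cV[R]_(d1 + d2)) (daff : nat)
    (Hst : standing S G x0 daff)
    (R1 R2 : {fset Eel R (d1 + d2)})
    (HR1 : [set` R1] `<=` G)
    (HR2 : property2 G x0 R2) :
  exists R3 : {fset Eel R (d1 + d2)},
    [/\ [set` R3] `<=` G,
        fsubset R1 (Rprod R3 R2) &
        seminorms_equiv (pR x0 (Rprod R3 R2)) (qR x0 R3 R2)].
Proof.
case: Hst => [[_ [HG _]] _ _ _ _].
case: HR2 => R2G [R' [R'' [R'G R'1 R'gen R''P R'R''R2]]]; case: R''P => _ _ R''1 R''aff.
have R'R''2 r h : R' r -> R'' h -> emul r h \in R2.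
  by move=> R'r R''h; apply: R'R''R2; exists r => //; exists h.
have R''2 h : R'' h -> h \in R2 by move=> R''h; rewrite -(emul1g h); apply: R'R''2.
have [R3 [R3G eR3 R1R3 R3chain]] := connected_cover HG R'G R'gen HR1.
exists R3; split => //.
  apply/fsubsetP => g /(fsubsetP R1R3) gR3.
  by rewrite -(emulg1 g) mem_Rprod // R''2.
apply: pR_qR_equiv HG _ _ R''2 R'R''2 R''aff eR3 R3chain => [h|g].
  exact: R2G.
exact: R3G.
Qed.
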